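(* Let $R$ be the right shift on $\ell^2_{\mathbb{H}}(\mathbb{Z})$ defined by $R(x)=y$ with $y_i=x_{i+1}$ for $i\neq-1$ and $y_{-1}=0$. Then $\sigma_{S,\pi}^{\Phi^0}(R)$ is properly contained in $\sigma_S(R)$.
   Context: $\mathbb{H}$ denotes the quaternions, $Re(q)$ the real part and $|q|$ the norm. $\ell^2_{\mathbb{H}}(\mathbb{Z})=\{x:\mathbb{Z}\to\mathbb{H}:\sum_i|x_i|^2<\infty\}$ is a right quaternionic Hilbert space with $xa=(x_ia)_i$ and $\langle x,y\rangle=\sum_i\overline{x_i}y_i$, equipped with the left multiplication induced by the standard Hilbert basis $\{e_n\}$, i.e. $qx=(qx_i)_i$. $\mathcal{B}=\mathcal{B}(\ell^2_{\mathbb{H}}(\mathbb{Z}))$ (bounded right linear operators with $(qT)x=q(Tx)$, $(Tq)x=T(qx)$, composition, operator norm) is a quaternionic two-sided Banach algebra with unit $\mathbb{I}$; $\mathcal{K}$ is its ideal of compact operators and $\pi:\mathcal{B}\to\mathcal{B}/\mathcal{K}$ the quotient map. For $T\in\mathcal{B}$, $R_q(T)=T^2-2Re(q)T+|q|^2\mathbb{I}$, $\sigma_S(T)=\{q\in\mathbb{H}:R_q(T)\notin\mathcal{B}^{-1}\}$, $\Phi_\pi^0=\mathcal{B}^{-1}+\mathcal{K}$, and $\sigma_{S,\pi}^{\Phi^0}(T)=\{q\in\mathbb{H}:R_q(T)\notin\Phi_\pi^0\}$. *)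

From Stdlib Require Import Reals ZArith.
From Coquelicot Require Import Coquelicot.
Open Scope R_scope.

Record quat := Quat { qre : R; qi : R; qj : R; qk : R }.

Definition q0 : quat := Quat 0 0 0 0.
Definition qadd (p q : quat) : quat :=
  Quat (qre p + qre q) (qi p + qi q) (qj p + qj q) (qk p + qk q).
Definition qopp (p : quat) : quat := Quat (- qre p) (- qi p) (- qj p) (- qk p).
Definition qmul (p q : quat) : quat :=
  Quat (qre p * qre q - qi p * qi q - qj p * qj q - qk p * qk q)
       (qre p * qi q + qi p * qre q + qj p * qk q - qk p * qj q)
       (qre p * qj q - qi p * qk q + qj p * qre q + qk p * qi q)
       (qre p * qk q + qi p * qj q - qj p * qi q + qk p * qre q).
Definition qscal (r : R) (p : quat) : quat :=
  Quat (r * qre p) (r * qi p) (r * qj p) (r * qk p).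
Definition qnorm2 (p : quat) : R :=
  qre p * qre p + qi p * qi p + qj p * qj p + qk p * qk p.
Definition qnorm (p : quat) : R := sqrt (qnorm2 p).

Definition seqH := Z -> quat.

Definition sadd (x y : seqH) : seqH := fun i => qadd (x i) (y i).
Definition sopp (x : seqH) : seqH := fun i => qopp (x i).
Definition ssub (x y : seqH) : seqH := sadd x (sopp y).
Definition srmul (x : seqH) (a : quat) : seqH := fun i => qmul (x i) a.
Definition sscal (r : R) (x : seqH) : seqH := fun i => qscal r (x i).

Definition psum2 (x : seqH) (N : nat) : R :=
  sum_f_R0 (fun n => qnorm2 (x (Z.of_nat n - Z.of_nat N)%Z)) (2 * N).

Definition in_l2 (x : seqH) : Prop := exists M : R, forall N, psum2 x N <= M.

Definition l2norm2 (x : seqH) : R := real (Lim_seq (psum2 x)).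
Definition l2norm (x : seqH) : R := sqrt (l2norm2 x).

(** * Operators.  An operator is a map on sequences; only its action on
    l^2 matters. *)
Definition op := seqH -> seqH.

Definition op_id : op := fun x => x.

Definition in_B (T : op) : Prop :=
  (forall x, in_l2 x -> in_l2 (T x)) /\
  (forall x y a, in_l2 x -> in_l2 y ->
     forall i, T (sadd (srmul x a) y) i = sadd (srmul (T x) a) (T y) i) /\
  (exists C : R, 0 <= C /\ forall x, in_l2 x -> l2norm (T x) <= C * l2norm x).

Definition invertible_B (T : op) : Prop :=
  in_B T /\ exists S : op, in_B S /\
    (forall x, in_l2 x -> forall i, S (T x) i = x i) /\
    (forall x, in_l2 x -> forall i, T (S x) i = x i).

Definition l2_cvg (u : nat -> seqH) (y : seqH) : Prop :=
  is_lim_seq (fun k => l2norm (ssub (u k) y)) 0.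

(** K is compact: K in B and K maps bounded sequences to sequences having
    a convergent subsequence (equivalently, bounded sets to relatively
    compact sets, l^2 being complete). *)
Definition compact_op (K : op) : Prop :=
  in_B K /\
  forall u : nat -> seqH, (forall k, in_l2 (u k)) ->
    (exists M : R, forall k, l2norm (u k) <= M) ->
    exists (phi : nat -> nat) (y : seqH),
      (forall n m, (n < m)%nat -> (phi n < phi m)%nat) /\ in_l2 y /\
      l2_cvg (fun k => K (u (phi k))) y.

Definition in_Phi0 (T : op) : Prop :=
  exists A K : op, invertible_B A /\ compact_op K /\
    forall x, in_l2 x -> forall i, T x i = sadd (A x) (K x) i.

Definition Rq (q : quat) (T : op) : op :=
  fun x => sadd (ssub (T (T x)) (sscal (2 * qre q) (T x)))
                (sscal (qnorm2 q) x).

Definition sigma_S (T : op) : quat -> Prop :=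
  fun q => ~ invertible_B (Rq q T).
Definition sigma_S_Phi0 (T : op) : quat -> Prop :=
  fun q => ~ in_Phi0 (Rq q T).

Definition shiftR : op :=
  fun x i => if Z.eqb i (-1)%Z then q0 else x (i + 1)%Z.

From Stdlib Require Import Reals ZArith.
From Coquelicot Require Import Coquelicot.
From Stdlib Require Import Lia Lra Psatz List Rtopology ClassicalEpsilon FunctionalExtensionality.
Import ListNotations.
Open Scope R_scope.

(* An invertible operator [T] lies in [B^-1 + K] as [T + 0], which gives the
   inclusion.  At [q = 0] we have [R_0(R) = R^2], and [R^2] is the shift
   [x |-> (x_(i+2))_i] up to an operator supported on the indices [-2, -1];
   such finite-rank operators are compact (Bolzano-Weierstrass on finitely many
   real coordinates), so [R^2] lies in [B^-1 + K].  But [R^2] annihilates [e_0],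
   so it is not invertible. *)

Lemma qnorm2_nonneg p : 0 <= qnorm2 p.
Proof. unfold qnorm2; nra. Qed.

Lemma qnorm2_q0 : qnorm2 q0 = 0.
Proof. unfold qnorm2, q0; simpl; ring. Qed.

Lemma quat_eq p q :
  qre p = qre q -> qi p = qi q -> qj p = qj q -> qk p = qk q -> p = q.
Proof. destruct p, q; simpl; intros; subst; reflexivity. Qed.

Section NonnegSums.

Variable f : nat -> R.
Hypothesis f_nonneg : forall n, 0 <= f n.

Lemma sum_f_R0_le_add m l : sum_f_R0 f m <= sum_f_R0 f (m + l).
Proof.
  induction l as [|l IHl]; [rewrite Nat.add_0_r; lra|].
  rewrite Nat.add_succ_r; simpl; specialize (f_nonneg (S (m + l))); lra.
Qed.

Lemma le_sum_f_R0 j : f j <= sum_f_R0 f j.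
Proof.
  destruct j as [|j]; simpl; [lra|].
  pose proof (cond_pos_sum f j f_nonneg); lra.
Qed.

Lemma sum_f_R0_shift_le j m :
  sum_f_R0 (fun n => f (n + j)%nat) m <= sum_f_R0 f (m + j).
Proof.
  induction m as [|m IHm]; simpl; [apply le_sum_f_R0|].
  replace (S (m + j)) with (S m + j)%nat by lia; lra.
Qed.

End NonnegSums.

Lemma sum_f_R0_indicator_le (c : R) (N : nat) (j : Z) m : 0 <= c ->
  sum_f_R0 (fun n => if Z.eqb (Z.of_nat n - Z.of_nat N) j then c else 0) m <= c.
Proof.
  intros Hc.
  enough (H : sum_f_R0 (fun n => if Z.eqb (Z.of_nat n - Z.of_nat N) j then c else 0) m <= c /\
    ((Z.of_nat m < j + Z.of_nat N)%Z ->
     sum_f_R0 (fun n => if Z.eqb (Z.of_nat n - Z.of_nat N) j then c else 0) m = 0))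
    by apply H.
  induction m as [|m [IHle IHeq]]; cbn [sum_f_R0].
  - destruct (Z.eqb_spec (Z.of_nat 0 - Z.of_nat N) j); split; intros; lra || lia.
  - destruct (Z.eqb_spec (Z.of_nat (S m) - Z.of_nat N) j).
    + rewrite IHeq by lia; split; intros; lra || lia.
    + split; [lra|]; intros; rewrite IHeq by lia; lra.
Qed.

Definition zshift (k : Z) : op := fun x i => x (i + k)%Z.

Lemma psum2_nonneg x N : 0 <= psum2 x N.
Proof. apply cond_pos_sum; intros; apply qnorm2_nonneg. Qed.

Lemma psum2_zshift_le x k N :
  psum2 (zshift k x) N <= psum2 x (N + Z.to_nat (Z.abs k)).
Proof.
  unfold psum2, zshift; set (m := Z.to_nat (Z.abs k)); set (j := Z.to_nat (k + Z.of_nat m)).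
  set (f := fun n => qnorm2 (x (Z.of_nat n - Z.of_nat (N + m))%Z)).
  rewrite (sum_eq _ (fun n => f (n + j)%nat)) by (intros; unfold f, j, m; do 2 f_equal; lia).
  eapply Rle_trans; [apply sum_f_R0_shift_le; intros; apply qnorm2_nonneg|].
  replace (2 * (N + m))%nat with (2 * N + j + (2 * m - j))%nat by (unfold j, m; lia).
  apply sum_f_R0_le_add; intros; apply qnorm2_nonneg.
Qed.

Lemma psum2_incr x N : psum2 x N <= psum2 x (S N).
Proof.
  unfold psum2; set (f := fun n => qnorm2 (x (Z.of_nat n - Z.of_nat (S N))%Z)).
  rewrite (sum_eq _ (fun n => f (n + 1)%nat)) by (intros; unfold f; do 2 f_equal; lia).
  eapply Rle_trans; [apply sum_f_R0_shift_le; intros; apply qnorm2_nonneg|].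
  replace (2 * S N)%nat with (2 * N + 1 + 1)%nat by lia.
  apply sum_f_R0_le_add; intros; apply qnorm2_nonneg.
Qed.

Lemma is_lim_psum2 x : in_l2 x -> is_lim_seq (psum2 x) (l2norm2 x).
Proof.
  intros [M HM].
  destruct (ex_finite_lim_seq_incr (psum2 x) M (psum2_incr x) HM) as [l Hl].
  unfold l2norm2; rewrite (is_lim_seq_unique _ _ Hl); exact Hl.
Qed.

Lemma psum2_le_l2norm2 x N : in_l2 x -> psum2 x N <= l2norm2 x.
Proof.
  intros Hx; apply is_lim_seq_incr_compare; [apply is_lim_psum2, Hx | apply psum2_incr].
Qed.

Lemma l2norm2_nonneg x : in_l2 x -> 0 <= l2norm2 x.
Proof. intros Hx; apply (Rle_trans _ _ _ (psum2_nonneg x 0)), psum2_le_l2norm2, Hx. Qed.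

Lemma l2norm2_le x M : (forall N, psum2 x N <= M) -> l2norm2 x <= M.
Proof.
  intros HM.
  exact (is_lim_seq_le _ (fun _ => M) _ M HM
           (is_lim_psum2 x (ex_intro _ M HM)) (is_lim_seq_const M)).
Qed.

Lemma qnorm2_le_l2norm2 x j : in_l2 x -> qnorm2 (x j) <= l2norm2 x.
Proof.
  intros Hx; set (N := Z.to_nat (Z.abs j)).
  apply (Rle_trans _ (psum2 x N)); [|apply psum2_le_l2norm2, Hx].
  unfold psum2; set (f := fun n => qnorm2 (x (Z.of_nat n - Z.of_nat N)%Z)).
  replace (qnorm2 (x j)) with (f (Z.to_nat (j + Z.of_nat N)))
    by (unfold f; do 2 f_equal; unfold N; lia).
  replace (2 * N)%nat with (Z.to_nat (j + Z.of_nat N) + (2 * N - Z.to_nat (j + Z.of_nat N)))%nat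
    by (unfold N; lia).
  eapply Rle_trans; [apply le_sum_f_R0 | apply sum_f_R0_le_add]; intros; apply qnorm2_nonneg.
Qed.

Definition supported_on (L : list Z) (x : seqH) : Prop :=
  forall i, ~ In i L -> x i = q0.

Definition sum_qnorm2 (L : list Z) (x : seqH) : R :=
  fold_right Rplus 0 (map (fun j => qnorm2 (x j)) L).

Lemma sum_qnorm2_le L x y :
  (forall j, qnorm2 (x j) <= qnorm2 (y j)) -> sum_qnorm2 L x <= sum_qnorm2 L y.
Proof.
  intros Hxy; unfold sum_qnorm2; induction L as [|j L IHL]; simpl; [lra|].
  specialize (Hxy j); lra.
Qed.

Lemma psum2_le_sum_qnorm2 L x N : supported_on L x -> psum2 x N <= sum_qnorm2 L x.
Proof.
  revert x; induction L as [|j L IHL]; intros x Hx.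
  - unfold psum2, sum_qnorm2; simpl.
    rewrite (sum_eq _ (fun _ => 0)) by (intros; rewrite Hx by auto; apply qnorm2_q0).
    rewrite sum_cte; lra.
  - set (x' := fun i => if Z.eqb i j then q0 else x i).
    assert (Hx' : supported_on L x').
    { intros i Hi; unfold x'; destruct (Z.eqb_spec i j); [reflexivity|].
      apply Hx; intros [|]; auto. }
    apply (Rle_trans _ (psum2 x' N +
      sum_f_R0 (fun n => if Z.eqb (Z.of_nat n - Z.of_nat N) j then qnorm2 (x j) else 0)
               (2 * N))).
    + unfold psum2; rewrite <- plus_sum; apply sum_Rle; intros n _; unfold x'.
      destruct (Z.eqb_spec (Z.of_nat n - Z.of_nat N) j) as [->|]; [|lra].
      rewrite qnorm2_q0; lra.
    + unfold sum_qnorm2 at 1; cbn [fold_right map]; fold (sum_qnorm2 L x).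
      pose proof (IHL x' Hx').
      assert (sum_qnorm2 L x' <= sum_qnorm2 L x).
      { apply sum_qnorm2_le; intros i; unfold x'.
        destruct (Z.eqb i j); [rewrite qnorm2_q0; apply qnorm2_nonneg | lra]. }
      pose proof (sum_f_R0_indicator_le (qnorm2 (x j)) N j (2 * N) (qnorm2_nonneg _)).
      lra.
Qed.

Lemma supported_in_l2 L x : supported_on L x -> in_l2 x.
Proof. intros Hx; exists (sum_qnorm2 L x); intros N; apply psum2_le_sum_qnorm2, Hx. Qed.

Lemma l2norm2_le_sum_qnorm2 L x : supported_on L x -> l2norm2 x <= sum_qnorm2 L x.
Proof. intros Hx; apply l2norm2_le; intros N; apply psum2_le_sum_qnorm2, Hx. Qed.

Lemma lt_succ_strict_mono (phi : nat -> nat) :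
  (forall n, (phi n < phi (S n))%nat) -> forall n m, (n < m)%nat -> (phi n < phi m)%nat.
Proof.
  intros Hphi n m Hnm; induction Hnm; [apply Hphi|]; specialize (Hphi m); lia.
Qed.

Fixpoint select_increasing (g : nat -> nat -> nat) (n : nat) : nat :=
  match n with
  | O => g O O
  | S n => g (S n) (S (select_increasing g n))
  end.

Lemma bounded_cvg_subseq (u : nat -> R) B : (forall n, Rabs (u n) <= B) ->
  exists phi (l : R), (forall n, (phi n < phi (S n))%nat) /\
    is_lim_seq (fun n => u (phi n)) l.
Proof.
  intros HB.
  destruct (Bolzano_Weierstrass u (fun c => -B <= c <= B) (compact_P3 (-B) B)) as [l Hl].
  { intros n; apply Rabs_le_between, HB. }
  assert (Hnear : forall nN : nat * nat, exists p,
            (snd nN <= p)%nat /\ Rabs (u p - l) < / INR (S (fst nN))).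
  { intros [n N].
    assert (Hpos : 0 < / INR (S n)) by (apply Rinv_0_lt_compat, lt_0_INR; lia).
    destruct (Hl (disc l (mkposreal _ Hpos))) with N as [p Hp].
    - exists (mkposreal _ Hpos); intros y Hy; exact Hy.
    - exists p; exact Hp. }
  destruct (choice _ Hnear) as [g Hg].
  set (phi := select_increasing (fun n N => g (n, N))).
  assert (Hphi : forall n, Rabs (u (phi n) - l) < / INR (S n))
    by (intros [|n]; apply (Hg (_, _))).
  exists phi, l; split.
  - intros n; apply (Hg (S n, S (phi n))).
  - apply is_lim_seq_spec; intros eps.
    destruct (archimed_cor1 eps (cond_pos eps)) as [N [HN HN0]].
    exists N; intros n Hn.
    apply (Rlt_trans _ _ _ (Hphi n)), (Rle_lt_trans _ (/ INR N)); [|exact HN].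
    apply Rinv_le_contravar; [apply lt_0_INR; lia | apply le_INR; lia].
Qed.

Lemma bounded_list_cvg_subseq (L : list (nat -> R)) B :
  (forall v, In v L -> forall n, Rabs (v n) <= B) ->
  exists phi, (forall n, (phi n < phi (S n))%nat) /\
    forall v, In v L -> ex_finite_lim_seq (fun n => v (phi n)).
Proof.
  induction L as [|v L IHL]; intros HB.
  - exists (fun n => n); split; [intros; lia | intros v []].
  - destruct IHL as [phi [Hphi Hlim]]; [intros; apply HB; now right|].
    destruct (bounded_cvg_subseq (fun n => v (phi n)) B) as [psi [l [Hpsi Hl]]].
    { intros; apply HB; now left. }
    exists (fun n => phi (psi n)); split.
    + intros n; apply lt_succ_strict_mono, Hpsi; exact Hphi.
    + intros w [<-|Hw]; [exists l; exact Hl|].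
      destruct (Hlim w Hw) as [l' Hl']; exists l'.
      apply (is_lim_seq_subseq (fun n => w (phi n))); [apply eventually_subseq, Hpsi | exact Hl'].
Qed.

Definition qcoords : list (quat -> R) := [qre; qi; qj; qk].

Lemma qcoord_abs_le c p B : In c qcoords -> qnorm2 p <= B * B -> Rabs (c p) <= Rabs B.
Proof.
  unfold qnorm2; intros Hc HB; apply Rsqr_le_abs_0; unfold Rsqr.
  repeat (destruct Hc as [<-|Hc]; [nra|]); destruct Hc.
Qed.

Lemma is_lim_qnorm2_sub (p : nat -> quat) (q : quat) :
  (forall c, In c qcoords -> is_lim_seq (fun k => c (p k)) (c q)) ->
  is_lim_seq (fun k => qnorm2 (qadd (p k) (qopp q))) 0.
Proof.
  intros Hp.
  assert (Hsq : forall c, In c qcoords ->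
            is_lim_seq (fun k => (c (p k) - c q) * (c (p k) - c q)) 0).
  { intros c Hc; replace 0 with ((c q - c q) * (c q - c q)) by ring.
    apply is_lim_seq_mult'; apply is_lim_seq_minus'; auto using is_lim_seq_const. }
  apply (is_lim_seq_ext (fun k =>
    (qre (p k) - qre q) * (qre (p k) - qre q) + (qi (p k) - qi q) * (qi (p k) - qi q) +
    ((qj (p k) - qj q) * (qj (p k) - qj q) + (qk (p k) - qk q) * (qk (p k) - qk q)))).
  { intros k; unfold qnorm2; simpl; ring. }
  replace 0 with (0 + 0 + (0 + 0)) by ring.
  repeat apply is_lim_seq_plus'; apply Hsq; simpl; tauto.
Qed.

Lemma is_lim_sum_qnorm2 L (x : nat -> seqH) :
  (forall j, In j L -> is_lim_seq (fun k => qnorm2 (x k j)) 0) ->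
  is_lim_seq (fun k => sum_qnorm2 L (x k)) 0.
Proof.
  unfold sum_qnorm2; induction L as [|j L IHL]; intros Hx; simpl.
  - apply is_lim_seq_const.
  - pose proof (is_lim_seq_plus' _ _ 0 0 (Hx j (or_introl eq_refl))
                  (IHL (fun i Hi => Hx i (or_intror Hi)))) as Hsum.
    rewrite Rplus_0_r in Hsum; exact Hsum.
Qed.

Definition lim_quat (p : nat -> quat) : quat :=
  Quat (real (Lim_seq (fun k => qre (p k)))) (real (Lim_seq (fun k => qi (p k))))
       (real (Lim_seq (fun k => qj (p k)))) (real (Lim_seq (fun k => qk (p k)))).

Lemma is_lim_lim_quat (p : nat -> quat) :
  (forall c, In c qcoords -> ex_finite_lim_seq (fun k => c (p k))) ->
  forall c, In c qcoords -> is_lim_seq (fun k => c (p k)) (c (lim_quat p)).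
Proof.
  intros Hp c Hc; destruct (Hp c Hc) as [l Hl].
  repeat (destruct Hc as [<-|Hc]; [simpl; rewrite (is_lim_seq_unique _ _ Hl); exact Hl|]).
  destruct Hc.
Qed.

Lemma compact_of_finite_support (T : op) (L : list Z) :
  in_B T -> (forall x, in_l2 x -> supported_on L (T x)) -> compact_op T.
Proof.
  intros HT Hsupp; split; [exact HT|].
  destruct HT as [Tl2 [_ [C [HC Tbd]]]].
  intros u Hu [M HM].
  assert (Hbound : forall k j, qnorm2 (T (u k) j) <= (C * M) * (C * M)).
  { intros k j.
    assert (Hnorm : l2norm (T (u k)) <= C * M).
    { apply (Rle_trans _ _ _ (Tbd _ (Hu k))), Rmult_le_compat_l; [exact HC | apply HM]. }
    apply (Rle_trans _ _ _ (qnorm2_le_l2norm2 _ j (Tl2 _ (Hu k)))).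
    rewrite <- (sqrt_sqrt _ (l2norm2_nonneg _ (Tl2 _ (Hu k)))).
    apply Rmult_le_compat; try apply sqrt_pos; exact Hnorm. }
  set (coords := flat_map (fun j => map (fun c k => c (T (u k) j)) qcoords) L).
  destruct (bounded_list_cvg_subseq coords (Rabs (C * M))) as [phi [Hphi Hlim]].
  { intros v Hv n; apply in_flat_map in Hv as [j [_ Hv]].
    apply in_map_iff in Hv as [c [<- Hc]]; apply qcoord_abs_le; auto. }
  set (y := fun j => if in_dec Z.eq_dec j L then lim_quat (fun k => T (u (phi k)) j) else q0).
  assert (Hy : forall j c, In c qcoords ->
            is_lim_seq (fun k => c (T (u (phi k)) j)) (c (y j))).
  { intros j c Hc; unfold y; destruct (in_dec Z.eq_dec j L) as [Hj|Hj].
    - apply is_lim_lim_quat; auto; intros c' Hc'.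
      apply (Hlim (fun k => c' (T (u k) j))), in_flat_map.
      exists j; split; [exact Hj|]; apply in_map_iff; exists c'; auto.
    - apply (is_lim_seq_ext (fun _ => c q0)); [|apply is_lim_seq_const].
      intros k; rewrite (Hsupp _ (Hu _) j Hj); reflexivity. }
  exists phi, y; split; [apply lt_succ_strict_mono, Hphi|]; split.
  - apply (supported_in_l2 L); intros j Hj; unfold y.
    destruct (in_dec Z.eq_dec j L); tauto.
  - assert (Hdiff : forall k, supported_on L (ssub (T (u (phi k))) y)).
    { intros k j Hj; unfold ssub, sadd, sopp, y; rewrite (Hsupp _ (Hu _) j Hj).
      destruct (in_dec Z.eq_dec j L); [tauto|].
      apply quat_eq; simpl; ring. }
    apply (is_lim_seq_le_le (fun _ => 0) _
             (fun k => sqrt (sum_qnorm2 L (ssub (T (u (phi k))) y)))).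
    + intros k; split; [apply sqrt_pos|].
      apply sqrt_le_1_alt, l2norm2_le_sum_qnorm2, Hdiff.
    + apply is_lim_seq_const.
    + rewrite <- sqrt_0; apply is_lim_seq_continuous; [apply continuity_pt_sqrt; lra|].
      apply is_lim_sum_qnorm2; intros j _; apply is_lim_qnorm2_sub, Hy.
Qed.

Definition zero_op : op := fun _ _ => q0.

Lemma zero_op_compact : compact_op zero_op.
Proof.
  assert (Hsupp : forall x, supported_on [] (zero_op x)) by (intros x i _; reflexivity).
  apply (compact_of_finite_support _ []); [|intros; apply Hsupp].
  split; [|split].
  - intros x _; apply (supported_in_l2 []), Hsupp.
  - intros; apply quat_eq; simpl; ring.
  - exists 0; split; [lra|]; intros x _.
    unfold l2norm; rewrite Rmult_0_l, <- sqrt_0; apply sqrt_le_1_alt.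
    apply (l2norm2_le_sum_qnorm2 []), Hsupp.
Qed.

Lemma invertible_in_Phi0 (T : op) : invertible_B T -> in_Phi0 T.
Proof.
  intros HT; exists T, zero_op; split; [exact HT|]; split; [exact zero_op_compact|].
  intros x _ i; apply quat_eq; simpl; ring.
Qed.

Lemma invertible_B_inj (T : op) x y : invertible_B T -> in_l2 x -> in_l2 y ->
  T x = T y -> forall i, x i = y i.
Proof.
  intros [_ [S [_ [HST _]]]] Hx Hy Hxy i.
  rewrite <- (HST x Hx i), <- (HST y Hy i), Hxy; reflexivity.
Qed.

Lemma zshift_in_B k : in_B (zshift k).
Proof.
  split; [|split].
  - intros x [M HM]; exists M; intros N.
    apply (Rle_trans _ _ _ (psum2_zshift_le x k N)), HM.
  - reflexivity.
  - exists 1; split; [lra|]; intros x Hx; rewrite Rmult_1_l.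
    apply sqrt_le_1_alt, l2norm2_le; intros N.
    apply (Rle_trans _ _ _ (psum2_zshift_le x k N)), psum2_le_l2norm2, Hx.
Qed.

Lemma zshift_invertible k : invertible_B (zshift k).
Proof.
  split; [apply zshift_in_B|]; exists (zshift (- k)); split; [apply zshift_in_B|].
  split; intros x _ i; unfold zshift; f_equal; lia.
Qed.

Lemma Rq_q0 (T : op) : Rq q0 T = fun x => T (T x).
Proof.
  apply functional_extensionality; intros x; apply functional_extensionality; intros i.
  apply quat_eq; unfold Rq, sadd, ssub, sopp, sscal, qnorm2; simpl; ring.
Qed.

Definition shiftR2_defect : op := fun x i =>
  if (Z.eqb i (-1) || Z.eqb i (-2))%bool then qopp (x (i + 2)%Z) else q0.

Lemma shiftR2_decomp x i : shiftR (shiftR x) i = sadd (zshift 2 x) (shiftR2_defect x) i.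
Proof.
  unfold shiftR, shiftR2_defect, zshift, sadd.
  destruct (Z.eqb_spec i (-1)) as [->|]; [apply quat_eq; simpl; ring|].
  destruct (Z.eqb_spec i (-2)) as [->|]; [apply quat_eq; simpl; ring|].
  destruct (Z.eqb_spec (i + 1) (-1)); [lia|].
  replace (i + 1 + 1)%Z with (i + 2)%Z by lia; apply quat_eq; simpl; ring.
Qed.

Lemma qnorm2_qopp p : qnorm2 (qopp p) = qnorm2 p.
Proof. unfold qnorm2; simpl; ring. Qed.

Lemma shiftR2_defect_supported x : supported_on [-1; -2]%Z (shiftR2_defect x).
Proof.
  intros i Hi; unfold shiftR2_defect.
  destruct (Z.eqb_spec i (-1)) as [->|]; [simpl in Hi; tauto|].
  destruct (Z.eqb_spec i (-2)) as [->|]; [simpl in Hi; tauto | reflexivity].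
Qed.

Lemma shiftR2_defect_in_B : in_B shiftR2_defect.
Proof.
  split; [|split].
  - intros x _; apply (supported_in_l2 _ _ (shiftR2_defect_supported x)).
  - intros x y a _ _ i; unfold shiftR2_defect, sadd, srmul.
    destruct (Z.eqb i (-1) || Z.eqb i (-2))%bool; apply quat_eq; simpl; ring.
  - exists 2; split; [lra|]; intros x Hx.
    assert (Hsq : l2norm2 (shiftR2_defect x) <= 4 * l2norm2 x).
    { apply (Rle_trans _ _ _ (l2norm2_le_sum_qnorm2 _ _ (shiftR2_defect_supported x))).
      unfold sum_qnorm2, shiftR2_defect; simpl; rewrite !qnorm2_qopp.
      pose proof (qnorm2_le_l2norm2 x 1 Hx); pose proof (qnorm2_le_l2norm2 x 0 Hx).
      pose proof (l2norm2_nonneg x Hx); lra. }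
    unfold l2norm; rewrite <- (sqrt_square 2), <- sqrt_mult_alt by lra.
    apply sqrt_le_1_alt; lra.
Qed.

Lemma shiftR2_in_Phi0 : in_Phi0 (fun x => shiftR (shiftR x)).
Proof.
  exists (zshift 2), shiftR2_defect; split; [apply zshift_invertible|]; split.
  - apply (compact_of_finite_support _ [-1; -2]%Z shiftR2_defect_in_B).
    intros x _; apply shiftR2_defect_supported.
  - intros x _ i; apply shiftR2_decomp.
Qed.

Lemma shiftR2_not_invertible : ~ invertible_B (fun x => shiftR (shiftR x)).
Proof.
  set (e0 := fun i => if Z.eqb i 0 then Quat 1 0 0 0 else q0).
  assert (He0 : supported_on [0%Z] e0).
  { intros i Hi; unfold e0; destruct (Z.eqb_spec i 0) as [->|]; [simpl in Hi; tauto | reflexivity]. }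
  assert (Hkill : shiftR (shiftR e0) = shiftR (shiftR (fun _ => q0))).
  { apply functional_extensionality; intros i; unfold shiftR, e0.
    repeat match goal with |- context [Z.eqb ?a ?b] => destruct (Z.eqb_spec a b) end;
      reflexivity || lia. }
  intros Hinv.
  assert (H0 := invertible_B_inj _ _ _ Hinv (supported_in_l2 _ _ He0)
                  (supported_in_l2 [] _ (fun i _ => eq_refl)) Hkill 0%Z).
  unfold e0, q0 in H0; simpl in H0; injection H0; lra.
Qed.

Theorem mainTheorem14 :
  (forall q : quat, sigma_S_Phi0 shiftR q -> sigma_S shiftR q) /\
  (exists q : quat, sigma_S shiftR q /\ ~ sigma_S_Phi0 shiftR q).
Proof.
  split.
  - intros q Hq Hinv; exact (Hq (invertible_in_Phi0 _ Hinv)).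
  - exists q0; unfold sigma_S, sigma_S_Phi0; rewrite Rq_q0; split.
    + exact shiftR2_not_invertible.
    + intros Hnot; exact (Hnot shiftR2_in_Phi0).
Qed.
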